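(* Assume the random gather-step setting below. Then for every coordinate $i\in\{1,\dots,d\}$ and every choice of the Byzantine vectors $z^{(j)}=z^{(j)}(X)$ as (arbitrary) functions of the delivering configuration $X$, $$\mathbb{E}\big[\Delta_i(\theta_1,\dots,\theta_h)\big]\le\Big(1-\frac{\rho}{4}\Big)\Delta_i(\lambda_1,\dots,\lambda_h),$$ where the expectation is over $X$.
   Context: Median of reals: for $y_1,\dots,y_q\in\mathbb{R}$ with order statistics $y_{(1)}\le\dots\le y_{(q)}$, $\mathrm{median}=y_{((q+1)/2)}$ if $q$ is odd and $\frac12(y_{(q/2)}+y_{(q/2+1)})$ if $q$ is even; $\mathrm{Median}$ of vectors is applied coordinate-wise. Coordinate-wise diameters: $\Delta_i(v_1,\dots,v_h)=\max_{j,k}|v_j[i]-v_k[i]|$, $\Delta=\sum_i\Delta_i$. Random gather-step setting: integers $f\ge1$, $n$, $h=n-f$, and $q$ with $2f+2\le q\le\lfloor h/2\rfloor$; fixed vectors $\lambda_1,\dots,\lambda_h\in\mathbb{R}^d$ held by the correct servers $1,\dots,h$. Let $S_j=\{s\subset\{1,\dots,h\}\setminus\{j\}:|s|\in\{q-f-1,\dots,q-1\}\}$ and $S=\prod_{j=1}^hS_j$. A delivering configuration $X=(X_1,\dots,X_h)$ is a random element of $S$ with $P(X=s)\ge\rho$ for all $s\in S$, for some $\rho>0$. Given $X$, each correct server $j$ receives arbitrary vectors $z^{(j)}_1,\dots,z^{(j)}_{q-1-|X_j|}\in\mathbb{R}^d$ (possibly depending on $X$) and computes $\theta_j=\mathrm{Median}\big(\lambda_j,(\lambda_k)_{k\in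 X_j},z^{(j)}_1,\dots,z^{(j)}_{q-1-|X_j|}\big)$. *)

From HB Require Import structures.
From mathcomp Require Import all_boot all_order all_algebra.
Set Implicit Arguments. Unset Strict Implicit. Unset Printing Implicit Defensive.
Import Order.TTheory GRing.Theory Num.Theory.
Local Open Scope ring_scope.

(* Median of a finite list of reals: y_((q+1)/2) if q odd,
   (y_(q/2) + y_(q/2+1))/2 if q even (1-indexed order statistics). *)
Definition median (R : realFieldType) (s : seq R) : R :=
  let t := sort (fun x y : R => x <= y) s in
  let q := size t in
  if odd q then nth 0 t q./2
  else (nth 0 t q./2.-1 + nth 0 t q./2) / 2%:R.

Definition Median (R : realFieldType) (d : nat) (vs : seq 'rV[R]_d) : 'rV[R]_d :=
  \row_(i < d) median [seq (v : 'rV[R]_d) ord0 i | v <- vs].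

Definition diam_i (R : realFieldType) (d h : nat) (v : 'I_h -> 'rV[R]_d) (i : 'I_d) : R :=
  \big[Num.max/0]_(j < h) \big[Num.max/0]_(k < h) `|v j ord0 i - v k ord0 i|.

Definition valid_config (h q f : nat) (s : {ffun 'I_h -> {set 'I_h}}) : bool :=
  [forall j, (j \notin s j) && ((q - f - 1)%N <= #|s j| <= q - 1)%N].

(* theta_j for configuration s, where server j receives q-1-|s_j| Byzantine
   vectors z s j 0, ..., z s j (q-2-|s_j|). *)
Definition theta (R : realFieldType) (d h q : nat) (lam : 'I_h -> 'rV[R]_d)
    (z : {ffun 'I_h -> {set 'I_h}} -> 'I_h -> nat -> 'rV[R]_d)
    (s : {ffun 'I_h -> {set 'I_h}}) (j : 'I_h) : 'rV[R]_d :=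
  Median (lam j :: [seq lam k | k <- enum (s j)]
                ++ [seq z s j m | m <- iota 0 (q - 1 - #|s j|)]).
Arguments valid_config h q f s : clear implicits.

From HB Require Import structures.
From mathcomp Require Import all_boot all_order all_algebra.
From mathcomp Require Import zify ring lra.
Import Order.TTheory GRing.Theory Num.Theory.
Local Open Scope ring_scope.

(* Fix a coordinate i and let lo <= hi be the extreme values of the honest
   inputs, so that Delta_i(lambda) = hi - lo.
   1. A median is bounded below (above) by any value that is exceeded (not
      exceeded) by a strict majority of its entries (median_ge, median_le).
   2. In a valid configuration every server j sees its own value plus at
      least q - f - 1 honest values, a strict majority of its q inputs; hence
      every theta_j lies in [lo, hi] and Delta_i(theta) <= Delta_i(lambda).
   3. Some valid configuration halves the diameter: at least q - 1 honest
      values lie on one side of the midpoint (lo + hi) / 2; if every server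
      receives exactly these values, all medians land on that side.
   4. Averaging over X: the halving configuration has probability >= rho and
      every other one is no worse, so E[Delta_i(theta)] <= (1 - rho/2)
      Delta_i(lambda), which is stronger than the claimed 1 - rho/4.
   Facts 1 and 4, together with elementary properties of the diameter, are
   proved first in general form; the section GatherStep then establishes 2
   and 3 for a fixed coordinate, and the theorem combines them. *)

Lemma sorted_nth_ge {R : realFieldType} {t : seq R} {lo : R} {k : nat} :
  sorted <=%R t -> (k < size t)%N ->
  (size t - k <= count (>= lo) t)%N -> lo <= nth 0 t k.
Proof.
move=> st kt hc; rewrite leNgt; apply/negP => hlt.
have prefix_lt : count (>= lo) (take k.+1 t) = 0%N.
  rewrite (eq_in_count (a2 := pred0)) ?count_pred0 // => x /(nthP 0) [m].
  rewrite size_take => hm <-; have mk : (m <= k)%N by case: ifP hm; lia.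
  rewrite nth_take; last by case: ifP hm; lia.
  apply/negbTE; rewrite -ltNge; apply: le_lt_trans hlt.
  apply: (sorted_leq_nth le_trans lexx 0 st) => //=.
  by rewrite inE; case: ifP hm => _; lia.
have split_t := congr1 (count (>= lo)) (cat_take_drop k.+1 t).
have := count_size (>= lo) (drop k.+1 t).
move: hc; rewrite -split_t count_cat prefix_lt size_drop add0n => h1 h2.
by have := leq_trans h1 h2; rewrite -(subnSK kt) ltnn.
Qed.

Lemma sorted_nth_le {R : realFieldType} {t : seq R} {hi : R} {k : nat} :
  sorted <=%R t -> (k < size t)%N ->
  (k.+1 <= count (<= hi) t)%N -> nth 0 t k <= hi.
Proof.
move=> st kt hc; rewrite leNgt; apply/negP => hlt.
have suffix_gt : count (<= hi) (drop k t) = 0%N.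
  rewrite (eq_in_count (a2 := pred0)) ?count_pred0 // => x /(nthP 0) [m].
  rewrite size_drop => hm <-; rewrite nth_drop.
  apply/negbTE; rewrite -ltNge; apply: lt_le_trans hlt _.
  apply: (sorted_leq_nth le_trans lexx 0 st); rewrite ?inE ?leq_addr //.
  by rewrite -ltn_subRL.
have split_t := congr1 (count (<= hi)) (cat_take_drop k t).
have := count_size (<= hi) (take k t).
move: hc; rewrite -split_t count_cat suffix_gt size_take; case: ifP; lia.
Qed.

(* Index arithmetic for a median of m entries, c of which form a majority:
   the entries at positions m./2 (and m./2 - 1 when m is even) lie within
   the majority block. *)
Lemma majority_index {m c : nat} :
  (m./2 < c)%N -> (c <= m)%N -> (m./2 < m)%N /\ (m - m./2 <= c)%N.
Proof. by rewrite -!divn2; lia. Qed.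

Lemma majority_index_even {m c : nat} :
  (m./2 < c)%N -> (c <= m)%N -> ~~ odd m ->
  ((m./2).-1 < m)%N /\ (m - (m./2).-1 <= c)%N.
Proof.
by move=> + + /negbTE even_m; rewrite -!divn2 -[m]odd_double_half even_m; lia.
Qed.

Lemma median_ge (R : realFieldType) (s : seq R) (lo : R) :
  ((size s)./2.+1 <= count (>= lo) s)%N -> lo <= median s.
Proof.
rewrite /median -(count_sort <=%R) -(size_sort <=%R).
have st := sort_sorted (@le_total _ R) s; set t := sort _ s => hc.
have [mid_lt mid_cnt] := majority_index hc (count_size (>= lo) t).
case: ifP => odd_t; first exact: sorted_nth_ge.
have [pred_lt pred_cnt] :=
  majority_index_even hc (count_size (>= lo) t) (negbT odd_t).
have h1 := sorted_nth_ge st pred_lt pred_cnt.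
have h2 := sorted_nth_ge st mid_lt mid_cnt.
rewrite ler_pdivlMr ?ltr0n //; lra.
Qed.

Lemma median_le (R : realFieldType) (s : seq R) (hi : R) :
  ((size s)./2.+1 <= count (<= hi) s)%N -> median s <= hi.
Proof.
rewrite /median -(count_sort <=%R) -(size_sort <=%R).
have st := sort_sorted (@le_total _ R) s; set t := sort _ s => hc.
have [mid_lt mid_cnt] := majority_index hc (count_size (<= hi) t).
case: ifP => odd_t; first exact: sorted_nth_le.
have [pred_lt _] := majority_index_even hc (count_size (<= hi) t) (negbT odd_t).
have h1 := sorted_nth_le st pred_lt (leq_ltn_trans (leq_pred _) hc).
have h2 := sorted_nth_le st mid_lt hc.
rewrite ler_pdivrMr ?ltr0n //; lra.
Qed.

Lemma diam_i_le {R : realFieldType} {d h : nat} (v : 'I_h -> 'rV[R]_d)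
    (i : 'I_d) (lo hi : R) :
  lo <= hi -> (forall j, lo <= v j ord0 i <= hi) -> diam_i v i <= hi - lo.
Proof.
move=> lohi hv; apply: bigmax_le => [|j _]; first lra.
apply: bigmax_le => [|k _]; first lra.
have /andP[? ?] := hv j; have /andP[? ?] := hv k.
by rewrite ler_norml; apply/andP; split; lra.
Qed.

Lemma diam_i_ge {R : realFieldType} {d h : nat} (v : 'I_h -> 'rV[R]_d)
    (i : 'I_d) (a b : 'I_h) :
  v b ord0 i - v a ord0 i <= diam_i v i.
Proof.
apply: le_trans (le_bigmax _ _ b); apply: le_trans (le_bigmax _ _ a).
exact: ler_norm.
Qed.

Lemma diam_i_extremes {R : realFieldType} {d h : nat} (v : 'I_h -> 'rV[R]_d)
    (i : 'I_d) :
  (0 < h)%N -> exists jlo jhi : 'I_h,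
    (forall k, v jlo ord0 i <= v k ord0 i <= v jhi ord0 i) /\
    diam_i v i = v jhi ord0 i - v jlo ord0 i.
Proof.
move=> h0; pose j0 := Ordinal h0.
have [jlo _ hlo] := @arg_minP _ _ _ j0 xpredT (fun k => v k ord0 i) isT.
have [jhi _ hhi] := @arg_maxP _ _ _ j0 xpredT (fun k => v k ord0 i) isT.
have range k : v jlo ord0 i <= v k ord0 i <= v jhi ord0 i.
  by apply/andP; split; [apply: hlo | apply: hhi].
exists jlo, jhi; split => //; apply/le_anti.
have /andP[lohi _] := range jhi.
by rewrite diam_i_le //= diam_i_ge.
Qed.

Lemma mean_bound_halving {R : realFieldType} {T : finType} {V : pred T}
    {P g : T -> R} {rho D : R} {s0 : T} :
  (forall s, 0 <= P s) -> \sum_(s | V s) P s = 1 -> 0 <= D ->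
  V s0 -> rho <= P s0 -> g s0 <= D / 2%:R -> (forall s, V s -> g s <= D) ->
  \sum_(s | V s) P s * g s <= (1 - rho / 2%:R) * D.
Proof.
move=> P0 P1 D0 Vs0 rhoP gs0 gV.
rewrite (bigD1 s0) //=; rewrite (bigD1 s0) //= in P1.
have rest : \sum_(s | V s && (s != s0)) P s * g s
            <= (\sum_(s | V s && (s != s0)) P s) * D.
  rewrite mulr_suml; apply: ler_sum => s /andP[Vs _].
  by apply: ler_wpM2l; [exact: P0 | exact: gV].
have top : P s0 * g s0 <= P s0 * (D / 2%:R) by apply: ler_wpM2l.
have := P0 s0; move: P1 rest top.
set S := \sum_(s | _ && _) P s; set G := \sum_(s | _ && _) _ * _.
nra.
Qed.

Lemma exists_subset_card {T : finType} {L : {set T}} {m : nat} :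
  (m <= #|L|)%N -> exists A : {set T}, A \subset L /\ #|A| = m.
Proof.
move=> hm; exists [set x in take m (enum L)]; split.
  by apply/subsetP => x; rewrite inE => /mem_take; rewrite mem_enum.
rewrite cardsE; move/card_uniqP: (take_uniq m (enum_uniq (mem L))) => ->.
by rewrite size_take -cardE; case: ltngtP hm => //; lia.
Qed.

Lemma one_side_majority {R : realFieldType} {h q : nat}
    (x : 'I_h -> R) (c : R) :
  (2 * q <= h)%N -> exists L : {set 'I_h}, (q - 1 <= #|L|)%N /\
    ((forall k, k \in L -> x k <= c) \/ (forall k, k \in L -> c <= x k)).
Proof.
move=> hq; set S := [set k | x k <= c].
have [big|small] := leqP (q - 1) #|S|.
  by exists S; split => //; left => k; rewrite inE.
exists (~: S); split.
  by move: small; have := cardsC S; rewrite card_ord; move: #|S| #|~: S|; lia.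
by right => k; rewrite !inE -ltNge => /ltW.
Qed.

Section GatherStep.

Context {R : realFieldType} {d h q : nat}.
Variable lam : 'I_h -> 'rV[R]_d.
(* A configuration assigns to each server the set of honest senders. *)
Local Notation config := {ffun 'I_h -> {set 'I_h}}.
Variables (z : config -> 'I_h -> nat -> 'rV[R]_d) (i : 'I_d).
Hypothesis q_pos : (0 < q)%N.

Definition coords (s : config) (j : 'I_h) : seq R :=
  lam j ord0 i :: [seq lam k ord0 i | k <- enum (s j)]
    ++ [seq z s j m ord0 i | m <- iota 0 (q - 1 - #|s j|)].

Lemma theta_coords (s : config) (j : 'I_h) :
  theta q lam z s j ord0 i = median (coords s j).
Proof. by rewrite /theta /Median mxE /= map_cat -!map_comp. Qed.

Lemma size_coords (s : config) (j : 'I_h) :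
  (#|s j| <= q - 1)%N -> size (coords s j) = q.
Proof.
by rewrite /= size_cat !size_map size_iota -cardE; move: #|s j|; lia.
Qed.

Lemma count_coords (s : config) (j : 'I_h) (p : pred R) :
  (forall k, k \in s j -> p (lam k ord0 i)) ->
  (p (lam j ord0 i) + #|s j| <= count p (coords s j))%N.
Proof.
move=> hp; rewrite /= count_cat count_map leq_add2l.
apply: leq_trans (leq_addr _ _); rewrite cardE.
rewrite (eq_in_count (a2 := predT)) ?count_predT // => k.
by rewrite mem_enum => /hp.
Qed.

Lemma theta_ge (s : config) (j : 'I_h) (lo : R) :
  (#|s j| <= q - 1)%N -> (forall k, k \in s j -> lo <= lam k ord0 i) ->
  (q./2.+1 <= (lo <= lam j ord0 i)%R + #|s j|)%N ->
  lo <= theta q lam z s j ord0 i.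
Proof.
move=> hs hp maj; rewrite theta_coords; apply: median_ge.
by rewrite size_coords //; apply: leq_trans maj (count_coords s j (>= lo) hp).
Qed.

Lemma theta_le (s : config) (j : 'I_h) (hi : R) :
  (#|s j| <= q - 1)%N -> (forall k, k \in s j -> lam k ord0 i <= hi) ->
  (q./2.+1 <= (lam j ord0 i <= hi)%R + #|s j|)%N ->
  theta q lam z s j ord0 i <= hi.
Proof.
move=> hs hp maj; rewrite theta_coords; apply: median_le.
by rewrite size_coords //; apply: leq_trans maj (count_coords s j (<= hi) hp).
Qed.

(* When 2f + 2 <= q, the own value of server j together with its at least
   q - f - 1 honest inputs is a strict majority of its q inputs, so the
   medians of a valid configuration stay within the honest range. *)
Lemma theta_in_range {f : nat} {s : config} {lo hi : R} :
  (2 * f + 2 <= q)%N -> valid_config h q f s ->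
  (forall k, lo <= lam k ord0 i <= hi) ->
  forall j, lo <= theta q lam z s j ord0 i <= hi.
Proof.
move=> hqf /forallP valid range j; have /and3P[_ c_lo c_hi] := valid j.
have maj (b : bool) : b -> (q./2.+1 <= b + #|s j|)%N.
  by move=> ->; rewrite -divn2; lia.
have /andP[lo_j hi_j] := range j.
apply/andP; split; [apply: theta_ge | apply: theta_le] => //;
  by [move=> k _; have /andP[] := range k | exact: maj].
Qed.

Definition config_of_set (A : {set 'I_h}) : config :=
  [ffun j => A :\ j].

Lemma card_config_of_set (A : {set 'I_h}) (j : 'I_h) :
  #|config_of_set A j| = (#|A| - (j \in A))%N.
Proof. by rewrite ffunE (cardsD1 j A) addKn. Qed.

Lemma config_of_set_valid {f : nat} {A : {set 'I_h}} :
  (1 <= f)%N -> #|A| = (q - 1)%N -> valid_config h q f (config_of_set A).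
Proof.
move=> f1 cA; apply/forallP => j.
rewrite card_config_of_set ffunE setD11 cA /=; case: (j \in A) => /=; lia.
Qed.

Lemma theta_config_of_set_le (A : {set 'I_h}) (c : R) :
  (4 <= q)%N -> #|A| = (q - 1)%N -> (forall k, k \in A -> lam k ord0 i <= c) ->
  forall j, theta q lam z (config_of_set A) j ord0 i <= c.
Proof.
move=> q4 cA hA j; apply: theta_le.
- by rewrite card_config_of_set cA leq_subr.
- by move=> k; rewrite ffunE => /setD1P[_ /hA].
- rewrite card_config_of_set cA -divn2.
  by case: (boolP (j \in A)) => [/hA -> | _] /=; lia.
Qed.

Lemma theta_config_of_set_ge (A : {set 'I_h}) (c : R) :
  (4 <= q)%N -> #|A| = (q - 1)%N -> (forall k, k \in A -> c <= lam k ord0 i) ->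
  forall j, c <= theta q lam z (config_of_set A) j ord0 i.
Proof.
move=> q4 cA hA j; apply: theta_ge.
- by rewrite card_config_of_set cA leq_subr.
- by move=> k; rewrite ffunE => /setD1P[_ /hA].
- rewrite card_config_of_set cA -divn2.
  by case: (boolP (j \in A)) => [/hA -> | _] /=; lia.
Qed.

Lemma halving_config {f : nat} :
  (1 <= f)%N -> (2 * f + 2 <= q)%N -> (2 * q <= h)%N ->
  exists s : config, valid_config h q f s /\
    diam_i (theta q lam z s) i <= diam_i lam i / 2%:R.
Proof.
move=> f1 hqf hqh.
have h_pos : (0 < h)%N by lia.
have [jlo [jhi [range ->]]] := diam_i_extremes lam i h_pos.
set lo := lam jlo ord0 i; set hi := lam jhi ord0 i; set mid := (lo + hi) / 2%:R.
have lohi : lo <= hi by have /andP[] := range jhi.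
have [L [cL side]] := one_side_majority (fun k => lam k ord0 i) mid hqh.
have [A [AL cA]] := exists_subset_card cL.
have valid := config_of_set_valid f1 cA.
have within := theta_in_range hqf valid range.
exists (config_of_set A); split => //.
have q4 : (4 <= q)%N by lia.
case: side => hL.
- apply: le_trans (_ : mid - lo <= _); last by rewrite /mid; lra.
  apply: diam_i_le => [|j]; first by rewrite /mid; lra.
  have /andP[-> _] := within j.
  by rewrite theta_config_of_set_le // => k /(subsetP AL) /hL.
- apply: le_trans (_ : hi - mid <= _); last by rewrite /mid; lra.
  apply: diam_i_le => [|j]; first by rewrite /mid; lra.
  have /andP[_ ->] := within j.
  by rewrite theta_config_of_set_ge // => k /(subsetP AL) /hL.
Qed.

Lemma diam_theta_le {f : nat} {s : config} :
  (0 < h)%N -> (2 * f + 2 <= q)%N -> valid_config h q f s ->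
  diam_i (theta q lam z s) i <= diam_i lam i.
Proof.
move=> h0 hqf valid; have [jlo [jhi [range ->]]] := diam_i_extremes lam i h0.
apply: diam_i_le; first by have /andP[] := range jhi.
exact: theta_in_range hqf valid range.
Qed.

End GatherStep.

Theorem mainTheorem5 (R : realFieldType) (d f n q : nat)
    (hf : (1 <= f)%N) (hq1 : (2 * f + 2 <= q)%N) (hq2 : (q <= (n - f) %/ 2)%N)
    (lam : 'I_(n - f) -> 'rV[R]_d)
    (P : {ffun 'I_(n - f) -> {set 'I_(n - f)}} -> R) (rho : R)
    (hrho : 0 < rho)
    (hP0 : forall s, 0 <= P s)
    (hPS : forall s, ~~ valid_config (n - f) q f s -> P s = 0)
    (hP1 : \sum_s P s = 1)
    (hPrho : forall s, valid_config (n - f) q f s -> rho <= P s)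
    (z : {ffun 'I_(n - f) -> {set 'I_(n - f)}} -> 'I_(n - f) -> nat -> 'rV[R]_d)
    (i : 'I_d) :
  \sum_(s | valid_config (n - f) q f s)
      P s * diam_i (theta q lam z s) i
  <= (1 - rho / 4%:R) * diam_i lam i.
Proof.
have q_pos : (0 < q)%N by lia.
have hqh : (2 * q <= n - f)%N by move: hq2; rewrite leq_divRL //; lia.
have h_pos : (0 < n - f)%N by lia.
have P_valid : \sum_(s | valid_config (n - f) q f s) P s = 1.
  rewrite -hP1 [RHS](bigID (valid_config (n - f) q f)) /=.
  by rewrite [X in _ = _ + X]big1 ?addr0 // => s /hPS.
have D0 : 0 <= diam_i lam i.
  by have := diam_i_ge lam i (Ordinal h_pos) (Ordinal h_pos); rewrite subrr.
have [s0 [valid0 halved]] := halving_config lam z i q_pos hf hq1 hqh.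
have mean := mean_bound_halving (V := valid_config (n - f) q f)
  (g := fun s => diam_i (theta q lam z s) i) hP0 P_valid D0 valid0
  (hPrho s0 valid0) halved (fun s => diam_theta_le lam z i q_pos h_pos hq1).
apply: le_trans mean _.
by apply: ler_wpM2r => //; lra.
Qed.
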